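(* Let $p_i(s)=\gamma_i/(m_is+d_i)$ for $i=1,\dots,n$, where $m_i\ge0$, $d_i>0$ and $\gamma_i>0$ for all $i$. Then there exists $h\in\mathrm{PR}\cap\mathscr{A}_0$ such that $p_1,\ldots,p_n\in\mathcal{P}_h$.
   Context: $\mathscr{H}_\infty$: functions analytic and bounded on $\mathrm{Re}(s)>0$; $\mathscr{A}_0$: those in $\mathscr{H}_\infty$ extending continuously to $j\mathbb{R}\cup\{\infty\}$. $g\in\mathrm{PR}$ if $g$ is analytic in $\mathrm{Re}(s)>0$, real for positive real $s$, and $\mathrm{Re}(g(s))\ge0$ for $\mathrm{Re}(s)>0$; $g\in\mathrm{ESPR}$ if moreover $g\in\mathscr{A}_0$ and $g-\epsilon\in\mathrm{PR}$ for some $\epsilon>0$. $\mathcal{P}_h:=\{p\in\mathscr{H}_\infty: p(0)\ne0,\ h(s)(1+p(s)/s)\in\mathrm{ESPR}\}$. *)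

From Stdlib Require Import Reals.
Open Scope R_scope.

Definition Cplx : Type := (R * R)%type.
Definition Re (z : Cplx) : R := fst z.
Definition Im (z : Cplx) : R := snd z.
Definition RtoC (x : R) : Cplx := (x, 0).
Definition Cadd (z w : Cplx) : Cplx := (fst z + fst w, snd z + snd w).
Definition Copp (z : Cplx) : Cplx := (- fst z, - snd z).
Definition Csub (z w : Cplx) : Cplx := Cadd z (Copp w).
Definition Cmul (z w : Cplx) : Cplx :=
  (fst z * fst w - snd z * snd w, fst z * snd w + snd z * fst w).
Definition Cinv (z : Cplx) : Cplx :=
  (fst z / (fst z ^ 2 + snd z ^ 2), - snd z / (fst z ^ 2 + snd z ^ 2)).
Definition Cdiv (z w : Cplx) : Cplx := Cmul z (Cinv w).
Definition Cnorm (z : Cplx) : R := sqrt (fst z ^ 2 + snd z ^ 2).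
Definition C1 : Cplx := RtoC 1.

Definition C_differentiable_at (f : Cplx -> Cplx) (z : Cplx) : Prop :=
  exists L : Cplx, forall eps, 0 < eps -> exists delta, 0 < delta /\
    forall h : Cplx, h <> RtoC 0 -> Cnorm h < delta ->
      Cnorm (Csub (Cdiv (Csub (f (Cadd z h)) (f z)) h) L) < eps.

Definition analytic_RHP (f : Cplx -> Cplx) : Prop :=
  forall z, 0 < Re z -> C_differentiable_at f z.

Definition H_inf (f : Cplx -> Cplx) : Prop :=
  analytic_RHP f /\ exists M, forall z, 0 < Re z -> Cnorm (f z) <= M.

Definition A0 (f : Cplx -> Cplx) : Prop :=
  H_inf f /\
  exists g : Cplx -> Cplx,
    (forall z, 0 < Re z -> g z = f z) /\
    (forall z, 0 <= Re z -> forall eps, 0 < eps -> exists delta, 0 < delta /\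
        forall w, 0 <= Re w -> Cnorm (Csub w z) < delta ->
          Cnorm (Csub (g w) (g z)) < eps) /\
    (exists Linf : Cplx, forall eps, 0 < eps -> exists R0,
        forall w, 0 <= Re w -> R0 < Cnorm w -> Cnorm (Csub (g w) Linf) < eps).

Definition PR (g : Cplx -> Cplx) : Prop :=
  analytic_RHP g /\
  (forall x, 0 < x -> Im (g (RtoC x)) = 0) /\
  (forall s, 0 < Re s -> 0 <= Re (g s)).

Definition ESPR (g : Cplx -> Cplx) : Prop :=
  A0 g /\ exists eps, 0 < eps /\ PR (fun s => Csub (g s) (RtoC eps)).

Definition P_h (h p : Cplx -> Cplx) : Prop :=
  H_inf p /\ p (RtoC 0) <> RtoC 0 /\
  ESPR (fun s => Cmul (h s) (Cadd C1 (Cdiv (p s) s))).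

(* Take h(s) = s / (s + a) with a >= 2 gamma_i / d_i for all i.  Then h is positive real and in
   A_0, and h(s) (1 + p_i(s) / s) = (s + p_i(s)) / (s + a), which extends continuously across
   s = 0 and tends to 1 at infinity.  Writing s = x + iy, its real part is
   [(|s|^2 + a x) M + gamma ((x + a)(m x + d) - m y^2)] / (|s + a|^2 M)  with  M = |m s + d|^2;
   the only negative term, gamma m y^2, is absorbed via (m y^2 - gamma)^2 >= 0 and
   2 gamma <= a d, and a small eps > 0 remains below the real part on the whole half-plane. *)

From Stdlib Require Import Reals Lra Psatz.
From Coquelicot Require Import Coquelicot.
From Pilot Require Import Defs.
Open Scope R_scope.

Definition continuous_at_C (f : C -> C) (z : C) : Prop :=
  forall eps, 0 < eps -> exists delta, 0 < delta /\
    forall w, Cmod (w - z)%C < delta -> Cmod (f w - f z)%C < eps.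

Lemma Cmod_sub_sym (u v : C) : Cmod (u - v)%C = Cmod (v - u)%C.
Proof. replace (u - v)%C with (- (v - u))%C by ring; apply Cmod_opp. Qed.

Lemma Cmod_sub_ge (u v : C) : Cmod u - Cmod v <= Cmod (u - v)%C.
Proof.
  pose proof (Cmod_triangle (u - v)%C v) as T.
  replace (u - v + v)%C with u in T by ring; lra.
Qed.

Lemma continuous_at_C_const (c z : C) : continuous_at_C (fun _ => c) z.
Proof.
  intros eps Heps; exists 1; split; [lra |]; intros w _.
  replace (c - c)%C with (0 : C) by ring; rewrite Cmod_0; lra.
Qed.

Lemma continuous_at_C_id (z : C) : continuous_at_C (fun w => w) z.
Proof. intros eps Heps; exists eps; split; auto. Qed.

Lemma continuous_at_C_comp (f g : C -> C) (z : C) :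
  continuous_at_C f z -> continuous_at_C g (f z) -> continuous_at_C (fun w => g (f w)) z.
Proof.
  intros Hf Hg eps Heps.
  destruct (Hg eps Heps) as [eta [Heta Hg']].
  destruct (Hf eta Heta) as [delta [Hdelta Hf']].
  exists delta; split; auto.
Qed.

Lemma continuous_at_C_plus (f g : C -> C) (z : C) :
  continuous_at_C f z -> continuous_at_C g z -> continuous_at_C (fun w => f w + g w)%C z.
Proof.
  intros Hf Hg eps Heps.
  destruct (Hf (eps / 2)) as [d1 [Hd1 H1]]; [lra |].
  destruct (Hg (eps / 2)) as [d2 [Hd2 H2]]; [lra |].
  exists (Rmin d1 d2); split; [apply Rmin_pos; lra |].
  intros w [Hw1 Hw2]%Rmin_Rgt.
  replace (f w + g w - (f z + g z))%C with ((f w - f z) + (g w - g z))%C by ring.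
  pose proof (Cmod_triangle (f w - f z) (g w - g z)).
  specialize (H1 w Hw1); specialize (H2 w Hw2); lra.
Qed.

Lemma continuous_at_C_opp (f : C -> C) (z : C) :
  continuous_at_C f z -> continuous_at_C (fun w => - f w)%C z.
Proof.
  intros Hf eps Heps; destruct (Hf eps Heps) as [delta [Hdelta H]].
  exists delta; split; auto; intros w Hw.
  replace (- f w - - f z)%C with (- (f w - f z))%C by ring; rewrite Cmod_opp; auto.
Qed.

Lemma continuous_at_C_mult (f g : C -> C) (z : C) :
  continuous_at_C f z -> continuous_at_C g z -> continuous_at_C (fun w => f w * g w)%C z.
Proof.
  intros Hf Hg eps Heps.
  set (K := 1 + Cmod (f z) + Cmod (g z)).
  pose proof (Cmod_ge_0 (f z)); pose proof (Cmod_ge_0 (g z)).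
  set (eta := Rmin 1 (eps / K)).
  assert (Heta : 0 < eta) by (apply Rmin_pos; [lra | apply Rdiv_lt_0_compat; unfold K; lra]).
  assert (HetaK : eta * K <= eps).
  { apply Rle_trans with (eps / K * K);
      [apply Rmult_le_compat_r; [unfold K; lra | apply Rmin_r] | right; field; unfold K; lra]. }
  pose proof (Rmin_l 1 (eps / K)) as Heta1; fold eta in Heta1.
  destruct (Hf eta Heta) as [d1 [Hd1 H1]].
  destruct (Hg eta Heta) as [d2 [Hd2 H2]].
  exists (Rmin d1 d2); split; [apply Rmin_pos; lra |].
  intros w [Hw1 Hw2]%Rmin_Rgt.
  specialize (H1 w Hw1); specialize (H2 w Hw2).
  set (u := (f w - f z)%C) in *; set (v := (g w - g z)%C) in *.
  replace (f w * g w - f z * g z)%C with (u * v + f z * v + u * g z)%C by (unfold u, v; ring).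
  pose proof (Cmod_triangle (u * v + f z * v) (u * g z)).
  pose proof (Cmod_triangle (u * v) (f z * v)).
  rewrite !Cmod_mult in *.
  pose proof (Cmod_ge_0 u); pose proof (Cmod_ge_0 v).
  unfold K in HetaK; nra.
Qed.

Lemma continuous_at_C_inv (c : C) : c <> (0 : C) -> continuous_at_C (fun w => / w)%C c.
Proof.
  intros Hc eps Heps.
  pose proof (proj1 (Cmod_gt_0 c) Hc) as Hm; set (mc := Cmod c) in *.
  exists (Rmin (mc / 2) (eps * mc * mc / 2)); split.
  { apply Rmin_pos; [lra |]. apply Rdiv_lt_0_compat; [|lra]. repeat apply Rmult_lt_0_compat; lra. }
  intros w [Hw1 Hw2]%Rmin_Rgt.
  pose proof (Cmod_sub_ge c w) as Hcw; rewrite Cmod_sub_sym in Hcw; fold mc in Hcw.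
  assert (Hw : w <> (0 : C)) by (apply Cmod_gt_0; lra).
  replace (/ w - / c)%C with ((c - w) / (w * c))%C by (field; auto).
  rewrite Cmod_div, Cmod_mult, Cmod_sub_sym by (apply Cmult_neq_0; auto); fold mc.
  apply Rlt_le_trans with ((eps * mc * mc / 2) / (Cmod w * mc)).
  - apply Rmult_lt_compat_r; [apply Rinv_0_lt_compat; nra | exact Hw2].
  - apply Rmult_le_reg_r with (Cmod w * mc); [nra |].
    replace (eps * mc * mc / 2 / (Cmod w * mc) * (Cmod w * mc)) with (eps * mc * mc / 2)
      by (field; split; lra).
    assert (0 <= eps * mc * (Cmod w - mc / 2)) by (apply Rmult_le_pos; nra).
    nra.
Qed.

(* [Q] is a slope at [z] that is continuous at 0; the derivative rules become ring identities. *)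
Definition caratheodory_at (f : C -> C) (z : C) : Prop :=
  exists Q : C -> C, continuous_at_C Q 0 /\ exists delta, 0 < delta /\
    forall h, Cmod h < delta -> f (z + h)%C = (f z + h * Q h)%C.

Lemma caratheodory_continuous (f : C -> C) (z : C) :
  caratheodory_at f z -> continuous_at_C f z.
Proof.
  intros [Q [HQ [d0 [Hd0 Hf]]]] eps Heps.
  destruct (HQ 1) as [d1 [Hd1 HQ1]]; [lra |].
  set (K := Cmod (Q 0) + 1).
  assert (HK : 1 <= K) by (pose proof (Cmod_ge_0 (Q 0)); unfold K; lra).
  exists (Rmin (Rmin d0 d1) (eps / K)); split.
  { repeat apply Rmin_pos; try lra; apply Rdiv_lt_0_compat; lra. }
  intros w [[Hw0 Hw1]%Rmin_Rgt Hw2]%Rmin_Rgt.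
  set (h := (w - z)%C) in *.
  replace w with (z + h)%C by (unfold h; ring).
  rewrite (Hf h Hw0).
  replace (f z + h * Q h - f z)%C with (h * Q h)%C by ring.
  rewrite Cmod_mult.
  assert (HQh : Cmod (Q h) < K).
  { replace h with (h - 0)%C in Hw1 by ring.
    pose proof (HQ1 h Hw1); pose proof (Cmod_sub_ge (Q h) (Q 0)); unfold K; lra. }
  pose proof (Cmod_ge_0 h); pose proof (Cmod_ge_0 (Q h)).
  apply Rle_lt_trans with (Cmod h * K); [apply Rmult_le_compat_l; lra |].
  replace eps with (eps / K * K) by (field; lra).
  apply Rmult_lt_compat_r; lra.
Qed.

Lemma caratheodory_C_differentiable (f : C -> C) (z : C) :
  caratheodory_at f z -> C_differentiable_at f z.
Proof.
  intros [Q [HQ [d0 [Hd0 Hf]]]]; exists (Q 0); intros eps Heps.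
  destruct (HQ eps Heps) as [d1 [Hd1 HQ1]].
  exists (Rmin d0 d1); split; [apply Rmin_pos; lra |].
  intros h Hh0 [Hh1 Hh2]%Rmin_Rgt; change C in h.
  change (Cmod ((f (z + h) - f z) / h - Q 0)%C < eps).
  rewrite (Hf h Hh1).
  replace ((f z + h * Q h - f z) / h)%C with (Q h) by (field; exact Hh0).
  apply HQ1; replace (h - 0)%C with h by ring; exact Hh2.
Qed.

Lemma caratheodory_local (f g : C -> C) (z : C) (r : R) :
  0 < r -> (forall w, Cmod (w - z)%C < r -> f w = g w) ->
  caratheodory_at g z -> caratheodory_at f z.
Proof.
  intros Hr Efg [Q [HQ [d0 [Hd0 Hg]]]].
  exists Q; split; auto; exists (Rmin d0 r); split; [apply Rmin_pos; lra |].
  intros h [Hh0 Hhr]%Rmin_Rgt.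
  assert (Hz : Cmod (z - z)%C < r) by (replace (z - z)%C with (0 : C) by ring; rewrite Cmod_0; lra).
  assert (Hzh : Cmod (z + h - z)%C < r) by (replace (z + h - z)%C with h by ring; exact Hhr).
  rewrite (Efg _ Hz), (Efg _ Hzh); auto.
Qed.

Lemma caratheodory_const (c z : C) : caratheodory_at (fun _ => c) z.
Proof.
  exists (fun _ => 0 : C); split; [apply continuous_at_C_const |].
  exists 1; split; [lra |]; intros h _; ring.
Qed.

Lemma caratheodory_id (z : C) : caratheodory_at (fun w => w) z.
Proof.
  exists (fun _ => 1 : C); split; [apply continuous_at_C_const |].
  exists 1; split; [lra |]; intros h _; ring.
Qed.

Lemma caratheodory_plus (f g : C -> C) (z : C) :
  caratheodory_at f z -> caratheodory_at g z -> caratheodory_at (fun w => f w + g w)%C z.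
Proof.
  intros [Q1 [HQ1 [d1 [Hd1 Hf]]]] [Q2 [HQ2 [d2 [Hd2 Hg]]]].
  exists (fun h => Q1 h + Q2 h)%C; split; [apply continuous_at_C_plus; auto |].
  exists (Rmin d1 d2); split; [apply Rmin_pos; lra |].
  intros h [Hh1 Hh2]%Rmin_Rgt; rewrite Hf, Hg by auto; ring.
Qed.

Lemma caratheodory_opp (f : C -> C) (z : C) :
  caratheodory_at f z -> caratheodory_at (fun w => - f w)%C z.
Proof.
  intros [Q [HQ [d [Hd Hf]]]].
  exists (fun h => - Q h)%C; split; [apply continuous_at_C_opp; auto |].
  exists d; split; auto; intros h Hh; rewrite Hf by auto; ring.
Qed.

Lemma caratheodory_mult (f g : C -> C) (z : C) :
  caratheodory_at f z -> caratheodory_at g z -> caratheodory_at (fun w => f w * g w)%C z.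
Proof.
  intros [Q1 [HQ1 [d1 [Hd1 Hf]]]] [Q2 [HQ2 [d2 [Hd2 Hg]]]].
  exists (fun h => Q1 h * g z + f z * Q2 h + h * (Q1 h * Q2 h))%C; split.
  { repeat apply continuous_at_C_plus; repeat apply continuous_at_C_mult;
      auto using continuous_at_C_const, continuous_at_C_id. }
  exists (Rmin d1 d2); split; [apply Rmin_pos; lra |].
  intros h [Hh1 Hh2]%Rmin_Rgt; rewrite Hf, Hg by auto; ring.
Qed.

Lemma caratheodory_inv (f : C -> C) (z : C) :
  caratheodory_at f z -> f z <> (0 : C) -> caratheodory_at (fun w => / f w)%C z.
Proof.
  intros Hcar Hz.
  pose proof (caratheodory_continuous f z Hcar) as Hcont.
  destruct Hcar as [Q [HQ [d1 [Hd1 Hf]]]].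
  destruct (Hcont (Cmod (f z))) as [d2 [Hd2 Hf2]]; [apply Cmod_gt_0; exact Hz |].
  (* f (z + h) = f z + h Q h, so 1 / f (z + h) - 1 / f z = h * (- Q h / (f (z + h) f z)) *)
  set (D := fun h => ((f z + h * Q h) * f z)%C).
  exists (fun h => - Q h * / D h)%C; split.
  { apply continuous_at_C_mult; [apply continuous_at_C_opp; exact HQ |].
    apply (continuous_at_C_comp D (fun w => / w)%C).
    - unfold D; apply continuous_at_C_mult; [| apply continuous_at_C_const].
      apply continuous_at_C_plus; [apply continuous_at_C_const |].
      apply continuous_at_C_mult; auto using continuous_at_C_id.
    - apply continuous_at_C_inv; unfold D.
      replace ((f z + 0 * Q 0) * f z)%C with (f z * f z)%C by ring.
      apply Cmult_neq_0; auto. }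
  exists (Rmin d1 d2); split; [apply Rmin_pos; lra |].
  intros h [Hh1 Hh2]%Rmin_Rgt.
  assert (Hzh : f (z + h)%C <> (0 : C)).
  { intros E.
    assert (Hh : Cmod (z + h - z)%C < d2) by (replace (z + h - z)%C with h by ring; exact Hh2).
    specialize (Hf2 _ Hh); rewrite E in Hf2.
    replace (0 - f z)%C with (- f z)%C in Hf2 by ring; rewrite Cmod_opp in Hf2; lra. }
  rewrite (Hf h Hh1) in Hzh |- *; unfold D; field; auto.
Qed.

Lemma caratheodory_minus (f g : C -> C) (z : C) :
  caratheodory_at f z -> caratheodory_at g z -> caratheodory_at (fun w => f w - g w)%C z.
Proof. intros Hf Hg; apply caratheodory_plus; [exact Hf | apply caratheodory_opp; exact Hg]. Qed.

Lemma caratheodory_div (f g : C -> C) (z : C) :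
  caratheodory_at f z -> caratheodory_at g z -> g z <> (0 : C) ->
  caratheodory_at (fun w => f w / g w)%C z.
Proof. intros Hf Hg Hz; apply caratheodory_mult; [exact Hf | apply caratheodory_inv; auto]. Qed.

Lemma Re_le_Cmod (z : C) : Re z <= Cmod z.
Proof. eapply Rle_trans; [apply Rle_abs | apply re_le_Cmod]. Qed.

Lemma Re_pos_near (z w : C) : Cmod (w - z)%C < Re z -> 0 < Re w.
Proof.
  intros H.
  assert (E : Complex.Re (w - z)%C = Re w - Re z) by (unfold Re; simpl; ring).
  pose proof (re_le_Cmod (w - z)%C) as Hre; rewrite E, Rabs_minus_sym in Hre.
  pose proof (Rle_abs (Re z - Re w)); lra.
Qed.

Lemma A0_of_extension (f g : C -> C) (L : C) (B K : R) :
  (forall z, 0 < Re z -> g z = f z) ->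
  (forall z, 0 <= Re z -> caratheodory_at g z) ->
  (forall z, 0 <= Re z -> Cmod (g z) <= B) ->
  (forall z, 0 <= Re z -> Cmod (g z - L)%C * Cmod z <= K) ->
  A0 f.
Proof.
  intros Egf Hcar Hbound Hdecay; split; [split |].
  - intros z Hz; apply caratheodory_C_differentiable.
    apply (caratheodory_local f g z (Re z) Hz); [| apply Hcar; lra].
    intros w Hw; symmetry; apply Egf, (Re_pos_near z w Hw).
  - exists B; intros z Hz; rewrite <- Egf by exact Hz; apply Hbound; lra.
  - exists g; split; [exact Egf | split].
    + intros z Hz eps Heps.
      destruct (caratheodory_continuous g z (Hcar z Hz) eps Heps) as [delta [Hdelta H]].
      exists delta; split; auto.
    + exists L; intros eps Heps; exists (K / eps); intros w Hw HKw.
      change (K / eps < Cmod w) in HKw; change (Cmod (g w - L)%C < eps).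
      assert (HK : 0 <= K).
      { specialize (Hdecay (0 : C)); simpl in Hdecay; rewrite Cmod_0, Rmult_0_r in Hdecay.
        apply Hdecay; simpl; lra. }
      assert (Hw0 : 0 < Cmod w) by (pose proof (Rdiv_le_0_compat K eps HK Heps); lra).
      apply Rmult_lt_reg_r with (Cmod w); auto.
      apply Rle_lt_trans with K; [apply Hdecay; exact Hw |].
      rewrite (Rmult_comm eps); replace K with (K / eps * eps) by (field; lra).
      apply Rmult_lt_compat_r; lra.
Qed.

Lemma Re_pos_neq0 (z : C) : 0 < Re z -> z <> (0 : C).
Proof. intros Hz E; rewrite E in Hz; simpl in Hz; lra. Qed.

Lemma Re_shift (s : C) (a : R) : Re (s + a)%C = Re s + a.
Proof. unfold Re; simpl; ring. Qed.

Lemma Cmod_le_Cmod_shift (s : C) (a : R) : 0 <= Re s -> 0 < a -> Cmod s <= Cmod (s + a)%C.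
Proof.
  destruct s as [x y]; unfold Re; simpl; intros Hx Ha.
  unfold Cmod; simpl; apply sqrt_le_1_alt; nra.
Qed.

Lemma shift_le_Cmod_shift (s : C) (a : R) : 0 <= Re s -> 0 < a -> a <= Cmod (s + a)%C.
Proof.
  intros Hs Ha; pose proof (Re_le_Cmod (s + a)%C) as H; rewrite Re_shift in H; lra.
Qed.

Lemma Cmod_div_shift_mul_le (N s : C) (a B : R) :
  0 <= Re s -> 0 < a -> Cmod N <= B -> Cmod (N / (s + a))%C * Cmod s <= B.
Proof.
  intros Hs Ha HN.
  pose proof (Cmod_le_Cmod_shift s a Hs Ha); pose proof (shift_le_Cmod_shift s a Hs Ha).
  pose proof (Cmod_ge_0 N).
  rewrite Cmod_div by (apply Re_pos_neq0; rewrite Re_shift; lra).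
  apply Rle_trans with (Cmod N / Cmod (s + a)%C * Cmod (s + a)%C).
  - apply Rmult_le_compat_l; [apply Rdiv_le_0_compat |]; lra.
  - replace (Cmod N / Cmod (s + a)%C * Cmod (s + a)%C) with (Cmod N) by (field; lra); lra.
Qed.

Lemma Cmod_div_shift_le (N s : C) (a B : R) :
  0 <= Re s -> 0 < a -> Cmod N <= B -> Cmod (N / (s + a))%C <= B / a.
Proof.
  intros Hs Ha HN; pose proof (shift_le_Cmod_shift s a Hs Ha); pose proof (Cmod_ge_0 N).
  rewrite Cmod_div by (apply Re_pos_neq0; rewrite Re_shift; lra).
  unfold Rdiv; apply Rmult_le_compat; try lra.
  - apply Rlt_le, Rinv_0_lt_compat; lra.
  - apply Rinv_le_contravar; lra.
Qed.

(* The complex operations of [Defs] are definitionally Coquelicot's; both are unfolded to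
   pairs of reals. *)
Ltac unfold_C :=
  unfold Defs.Cdiv, Csub, Cadd, Defs.Copp, Cmul, Defs.Cinv, Defs.RtoC, C1, Re, Im,
    Complex.Cdiv, Cminus, Cplus, Complex.Copp, Cmult, Complex.Cinv, Complex.RtoC in *;
  cbn [fst snd] in *.

Definition highpass (a : R) (s : C) : C := (s / (s + a))%C.

Definition first_order_lag (m d g : R) (s : C) : C := (g / (m * s + d))%C.

(* The extension of [highpass a s * (1 + first_order_lag m d g s / s)] across [s = 0]. *)
Definition compensated (a m d g : R) (s : C) : C := ((s + first_order_lag m d g s) / (s + a))%C.

Section Highpass.

Variable a : R.
Hypothesis Ha : 0 < a.

Lemma shift_neq0 (s : C) : 0 <= Re s -> (s + a)%C <> (0 : C).
Proof. intros Hs; apply Re_pos_neq0; rewrite Re_shift; lra. Qed.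

Lemma highpass_caratheodory (z : C) : 0 <= Re z -> caratheodory_at (highpass a) z.
Proof.
  intros Hz; apply caratheodory_div; [apply caratheodory_id | | exact (shift_neq0 z Hz)].
  apply caratheodory_plus; [apply caratheodory_id | apply caratheodory_const].
Qed.

Lemma Cmod_highpass_le (s : C) : 0 <= Re s -> Cmod (highpass a s) <= 1.
Proof.
  intros Hs; unfold highpass.
  pose proof (Cmod_le_Cmod_shift s a Hs Ha); pose proof (shift_le_Cmod_shift s a Hs Ha).
  rewrite Cmod_div by exact (shift_neq0 s Hs).
  apply Rle_div_l; lra.
Qed.

Lemma highpass_A0 : A0 (highpass a).
Proof.
  apply (A0_of_extension (highpass a) (highpass a) 1 1 a);
    auto using highpass_caratheodory, Cmod_highpass_le.
  intros s Hs.
  replace (highpass a s - 1)%C with ((- a) / (s + a))%C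
    by (unfold highpass; field; exact (shift_neq0 s Hs)).
  apply Cmod_div_shift_mul_le; auto.
  rewrite Cmod_opp, Cmod_R, Rabs_right; lra.
Qed.

Lemma highpass_PR : PR (highpass a).
Proof.
  split; [| split].
  - intros z Hz; apply caratheodory_C_differentiable, highpass_caratheodory; lra.
  - intros x Hx; unfold highpass; unfold_C; unfold Rdiv; ring.
  - intros [x y] Hx; unfold highpass; unfold_C.
    assert (0 < (x + a) ^ 2 + y ^ 2) by nra.
    match goal with |- 0 <= ?E =>
      replace E with ((x * (x + a) + y ^ 2) / ((x + a) ^ 2 + y ^ 2)) by (field; lra) end.
    apply Rdiv_le_0_compat; nra.
Qed.

End Highpass.

(* The numerator and the denominator of [Re_compensated] below.  [(m y^2 - g)^2 >= 0]
   absorbs the only negative term [- g m y^2]. *)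
Lemma numerator_lower_bound (x y m d g a : R) :
  0 <= x -> 0 <= m -> 0 < g -> 0 < a -> 2 * g <= a * d ->
  let r := x ^ 2 + y ^ 2 in let M := (m * x + d) ^ 2 + m ^ 2 * y ^ 2 in
  (r + a * x) * M / 2 + g * a * d / 2 <= (r + a * x) * M + g * ((x + a) * (m * x + d) - m * y ^ 2).
Proof.
  intros Hx Hm Hg Ha Had r M.
  assert (Hd : 0 < d) by nra.
  assert (HrM : m ^ 2 * y ^ 2 * y ^ 2 <= r * M).
  { unfold r, M.
    assert (0 <= (x ^ 2 + y ^ 2) * (m * x + d) ^ 2)
      by (apply Rmult_le_pos; [apply Rplus_le_le_0_compat |]; apply pow2_ge_0).
    assert (0 <= x ^ 2 * (m ^ 2 * y ^ 2))
      by (apply Rmult_le_pos; [| apply Rmult_le_pos]; apply pow2_ge_0).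
    nra. }
  assert (Hsq : 2 * g * (m * y ^ 2) <= m ^ 2 * y ^ 2 * y ^ 2 + g ^ 2)
    by (pose proof (pow2_ge_0 (m * y ^ 2 - g)); nra).
  assert (Hmx : 0 <= m * x) by (apply Rmult_le_pos; lra).
  assert (Hlin : a * d <= (x + a) * (m * x + d)) by (apply Rmult_le_compat; lra).
  assert (HaxM : 0 <= a * x * M) by (unfold M; apply Rmult_le_pos; nra).
  nra.
Qed.

(* Away from the origin ([r >= 4 eps a^2]) the term [eps a^2 M] is absorbed by [r M]; near it
   [M] stays bounded and [g a d] takes over. *)
Lemma denominator_upper_bound (x y m d g a eps : R) :
  0 <= x -> 0 <= m -> 0 < d -> 0 < g -> 0 < a -> 0 <= eps -> eps <= 1 / 8 ->
  eps * a * (8 * m ^ 2 * a ^ 2 + 2 * d ^ 2) <= g * d / 2 ->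
  let r := x ^ 2 + y ^ 2 in let M := (m * x + d) ^ 2 + m ^ 2 * y ^ 2 in
  eps * (((x + a) ^ 2 + y ^ 2) * M) <= (r + a * x) * M / 2 + g * a * d / 2.
Proof.
  intros Hx Hm Hd Hg Ha He0 He1 Heps r M.
  assert (Hr : 0 <= r) by (unfold r; pose proof (pow2_ge_0 x); pose proof (pow2_ge_0 y); lra).
  assert (Hmy : 0 <= m ^ 2 * y ^ 2) by (apply Rmult_le_pos; apply pow2_ge_0).
  assert (HM : 0 <= M) by (unfold M; pose proof (pow2_ge_0 (m * x + d)); lra).
  assert (Hax : 0 <= a * x) by (apply Rmult_le_pos; lra).
  assert (Hden : (x + a) ^ 2 + y ^ 2 = r + 2 * a * x + a ^ 2) by (unfold r; ring).
  assert (Hfar : eps * (2 * (r + a * x) * M) <= (r + a * x) * M / 4).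
  { assert (0 <= (r + a * x) * M) by (apply Rmult_le_pos; lra). nra. }
  assert (Hnear : eps * (a ^ 2 * M) <= r * M / 4 + g * a * d / 2).
  { destruct (Rle_lt_dec (4 * eps * a ^ 2) r) as [Hbig | Hsmall].
    - assert (0 <= g * a * d) by (repeat apply Rmult_le_pos; lra). nra.
    - assert (HM' : M <= 8 * m ^ 2 * a ^ 2 + 2 * d ^ 2).
      { assert (M <= 2 * m ^ 2 * r + 2 * d ^ 2) by (unfold M, r; pose proof (pow2_ge_0 (m * x - d)); nra).
        assert (r <= 4 * a ^ 2) by nra.
        nra. }
      assert (0 <= r * M) by (apply Rmult_le_pos; lra).
      nra. }
  assert (0 <= eps * (r * M)) by (apply Rmult_le_pos; [| apply Rmult_le_pos]; lra).
  assert (0 <= a * x * M) by (apply Rmult_le_pos; lra).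
  rewrite Hden; nra.
Qed.

Section FirstOrderLag.

Variables a m d g : R.
Hypotheses (Ha : 0 < a) (Hm : 0 <= m) (Hd : 0 < d) (Hg : 0 < g).

Let p := first_order_lag m d g.

Lemma lag_denominator_Re (s : C) : 0 <= Re s -> d <= Re (m * s + d)%C.
Proof.
  destruct s as [x y]; intros Hx; unfold_C.
  assert (0 <= m * x) by (apply Rmult_le_pos; lra); lra.
Qed.

Lemma lag_denominator_neq0 (s : C) : 0 <= Re s -> (m * s + d)%C <> (0 : C).
Proof. intros Hs; apply Re_pos_neq0; pose proof (lag_denominator_Re s Hs); lra. Qed.

Lemma lag_caratheodory (z : C) : 0 <= Re z -> caratheodory_at p z.
Proof.
  intros Hz; apply caratheodory_div; [apply caratheodory_const | | exact (lag_denominator_neq0 z Hz)].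
  apply caratheodory_plus; [| apply caratheodory_const].
  apply caratheodory_mult; [apply caratheodory_const | apply caratheodory_id].
Qed.

Lemma Cmod_lag_le (s : C) : 0 <= Re s -> Cmod (p s) <= g / d.
Proof.
  intros Hs; unfold p, first_order_lag.
  pose proof (lag_denominator_Re s Hs); pose proof (Re_le_Cmod (m * s + d)%C).
  rewrite Cmod_div, Cmod_R, Rabs_right by (auto using lag_denominator_neq0; lra).
  unfold Rdiv; apply Rmult_le_compat_l; [lra |]; apply Rinv_le_contravar; lra.
Qed.

Lemma lag_H_inf : H_inf p.
Proof.
  split.
  - intros z Hz; apply caratheodory_C_differentiable, lag_caratheodory; lra.
  - exists (g / d); intros z Hz; apply Cmod_lag_le; lra.
Qed.

Lemma lag_at_0_neq0 : p (RtoC 0) <> RtoC 0.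
Proof.
  intros E; apply (f_equal fst) in E; unfold p, first_order_lag in E; unfold_C.
  match type of E with ?L = _ => replace L with (g / d) in E by (field; lra) end.
  assert (0 < g / d) by (apply Rdiv_lt_0_compat; lra); lra.
Qed.

Let G (s : C) : C := (highpass a s * (1 + p s / s))%C.

Lemma compensated_caratheodory (z : C) : 0 <= Re z -> caratheodory_at (compensated a m d g) z.
Proof.
  intros Hz; apply caratheodory_div; [| | exact (shift_neq0 a Ha z Hz)].
  - apply caratheodory_plus; [apply caratheodory_id | exact (lag_caratheodory z Hz)].
  - apply caratheodory_plus; [apply caratheodory_id | apply caratheodory_const].
Qed.

Lemma compensated_eq (s : C) : 0 < Re s -> compensated a m d g s = G s.
Proof.
  intros Hs; pose proof (Re_pos_neq0 s Hs).
  pose proof (shift_neq0 a Ha s (Rlt_le _ _ Hs)); pose proof (lag_denominator_neq0 s (Rlt_le _ _ Hs)).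
  unfold compensated, G, highpass, p, first_order_lag; field; auto.
Qed.

Lemma compensated_A0 : A0 G.
Proof.
  apply (A0_of_extension G (compensated a m d g) 1 (1 + g / d / a) (g / d + a));
    auto using compensated_eq, compensated_caratheodory.
  - intros s Hs.
    replace (compensated a m d g s) with (highpass a s + p s / (s + a))%C
      by (unfold compensated, highpass, p; field; exact (shift_neq0 a Ha s Hs)).
    eapply Rle_trans; [apply Cmod_triangle |]; apply Rplus_le_compat.
    + exact (Cmod_highpass_le a Ha s Hs).
    + exact (Cmod_div_shift_le (p s) s a (g / d) Hs Ha (Cmod_lag_le s Hs)).
  - intros s Hs.
    replace (compensated a m d g s - 1)%C with ((p s - a) / (s + a))%C
      by (unfold compensated, p; field; exact (shift_neq0 a Ha s Hs)).
    apply Cmod_div_shift_mul_le; auto.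
    eapply Rle_trans; [apply Cmod_triangle |]; rewrite Cmod_opp, Cmod_R, Rabs_right by lra.
    pose proof (Cmod_lag_le s Hs); lra.
Qed.

Lemma Re_compensated (x y : R) : 0 <= x ->
  let r := x ^ 2 + y ^ 2 in let M := (m * x + d) ^ 2 + m ^ 2 * y ^ 2 in
  Re (compensated a m d g (x, y)) =
  ((r + a * x) * M + g * ((x + a) * (m * x + d) - m * y ^ 2)) / (((x + a) ^ 2 + y ^ 2) * M).
Proof.
  intros Hx r M.
  assert (Hmx : 0 <= m * x) by (apply Rmult_le_pos; lra).
  assert (HM : 0 < M) by (unfold M; pose proof (pow2_ge_0 (m * y)); nra).
  assert (Hden : 0 < (x + a) ^ 2 + y ^ 2) by nra.
  unfold compensated, first_order_lag, r, M in *; unfold_C; field; lra.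
Qed.

Lemma compensated_sub_PR (eps : R) :
  2 * g <= a * d -> 0 <= eps -> eps <= 1 / 8 ->
  eps * a * (8 * m ^ 2 * a ^ 2 + 2 * d ^ 2) <= g * d / 2 ->
  PR (fun s => G s - eps)%C.
Proof.
  intros Had He0 He1 Heps; split; [| split].
  - intros z Hz; apply caratheodory_C_differentiable.
    apply caratheodory_minus; [| apply caratheodory_const].
    apply caratheodory_mult; [apply highpass_caratheodory; lra |].
    apply caratheodory_plus; [apply caratheodory_const |].
    apply caratheodory_div; [apply lag_caratheodory; lra | apply caratheodory_id | apply Re_pos_neq0; exact Hz].
  - intros x Hx; unfold G, highpass, p, first_order_lag; unfold_C; unfold Rdiv; ring.
  - intros [x y] Hx.
    assert (E : Re (G (x, y) - eps)%C = Re (G (x, y)) - eps) by (unfold_C; ring).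
    rewrite E, <- compensated_eq by exact Hx; unfold Re in Hx; cbn [fst] in Hx.
    rewrite Re_compensated by lra; cbv zeta.
    pose proof (numerator_lower_bound x y m d g a ltac:(lra) Hm Hg Ha Had) as Hnum.
    pose proof (denominator_upper_bound x y m d g a eps ltac:(lra) Hm Hd Hg Ha He0 He1 Heps) as Hden.
    cbv zeta in Hnum, Hden.
    assert (Hmx : 0 <= m * x) by (apply Rmult_le_pos; lra).
    pose proof (pow2_ge_0 (m * y)).
    match goal with |- 0 <= ?N / ?D - eps => enough (eps <= N / D) by lra end.
    apply Rle_div_r; [apply Rmult_lt_0_compat; nra | lra].
Qed.

Lemma highpass_P_h (Had : 2 * g <= a * d) : P_h (highpass a) p.
Proof.
  set (K := a * (8 * m ^ 2 * a ^ 2 + 2 * d ^ 2)).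
  assert (HK : 0 < K).
  { unfold K; apply Rmult_lt_0_compat; [lra |].
    pose proof (pow2_ge_0 (m * a)); pose proof (pow_lt d 2 Hd); nra. }
  set (eps := Rmin (1 / 8) (g * d / (2 * K))).
  assert (Heps : 0 < eps) by (apply Rmin_pos; [lra | apply Rdiv_lt_0_compat; nra]).
  split; [exact lag_H_inf | split; [exact lag_at_0_neq0 |]].
  split; [exact compensated_A0 |].
  exists eps; split; [exact Heps |].
  apply compensated_sub_PR; [exact Had | lra | apply Rmin_l |].
  rewrite Rmult_assoc; fold K.
  replace (g * d / 2) with (g * d / (2 * K) * K) by (field; lra).
  apply Rmult_le_compat_r; [lra | apply Rmin_r].
Qed.

End FirstOrderLag.

Fixpoint highpass_corner (d g : nat -> R) (n : nat) : R :=
  match n with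
  | O => 1
  | S k => Rmax (highpass_corner d g k) (2 * g k / d k)
  end.

Lemma highpass_corner_pos (d g : nat -> R) (n : nat) : 0 < highpass_corner d g n.
Proof. induction n as [| n IH]; simpl; [lra | eapply Rlt_le_trans; [exact IH | apply Rmax_l]]. Qed.

Lemma highpass_corner_ge (d g : nat -> R) (n i : nat) :
  (i < n)%nat -> 2 * g i / d i <= highpass_corner d g n.
Proof.
  induction n as [| n IH]; intros Hi; [lia |]; simpl.
  destruct (Nat.eq_dec i n) as [-> | Hne]; [apply Rmax_r |].
  eapply Rle_trans; [apply IH; lia | apply Rmax_l].
Qed.

Theorem corollary1 (n : nat) (m d gamma : nat -> R)
  (Hm : forall i, (i < n)%nat -> 0 <= m i)
  (Hd : forall i, (i < n)%nat -> 0 < d i)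
  (Hg : forall i, (i < n)%nat -> 0 < gamma i) :
  exists h : Cplx -> Cplx, PR h /\ A0 h /\
    forall i, (i < n)%nat ->
      P_h h (fun s => Cdiv (RtoC (gamma i))
                           (Cadd (Cmul (RtoC (m i)) s) (RtoC (d i)))).
Proof.
  set (a := highpass_corner d gamma n).
  assert (Ha : 0 < a) by apply highpass_corner_pos.
  exists (highpass a); split; [exact (highpass_PR a Ha) | split; [exact (highpass_A0 a Ha) |]].
  intros i Hi.
  apply highpass_P_h; auto.
  pose proof (highpass_corner_ge d gamma n i Hi) as Hcorner; fold a in Hcorner.
  apply Rle_div_l in Hcorner; [lra | apply Hd; exact Hi].
Qed.
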